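(* Let $\underline{d}=(d_0,\dots,d_n)\in\mathbb{N}^{n+1}$, fix $k\in[0,n]$ with $d_k=\min(d_0,\dots,d_n)$, and let $\underline{e}$ be a rising vector. Then the orbit $\mathcal{O}(\underline{e})$ is contained in $\Sigma_{\underline{d}}$.
   Context: $\mathrm{Rep}_{\underline{d}}=\bigoplus_{i=1}^n\mathrm{Hom}(\mathbb{C}^{d_{i-1}},\mathbb{C}^{d_i})$ with the action of $\mathrm{GL}_{\underline{d}}=\prod_{i=0}^n\mathrm{GL}(d_i,\mathbb{C})$; $\Sigma_{\underline{d}}=\{(A_i)\in\mathrm{Rep}_{\underline{d}}: A_n\cdots A_1=0\}$. A rising vector is a tuple $\underline{e}=(e_0,\dots,e_{k-1},\star,e_{k+1},\dots,e_n)$ of nonnegative integers with $\sum_{i\ne k}e_i=d_k$. Its dot set: for $x\in[0,k-1]$ the points $(x,y)$ with $d_k-d_x-\sum_{i=x}^{k-1}e_i\le y<d_k-\sum_{i=x}^{k-1}e_i$; for $x=k$ the points $(k,y)$, $0\le y<d_k$; for $x\in[k+1,n]$ the points $(x,y)$ with $\sum_{i=k+1}^xe_i\le y<d_x+\sum_{i=k+1}^xe_i$. The quiver module $V(\underline{e})$ has at vertex $x$ the space with basis the dots of column $x$, the map $x-1\to x$ sending dot $(x-1,y)$ to $(x,y)$ if it exists and to $0$ otherwise. Choosing bases gives a tuple of matrices $(A_1,\dots,A_n)\in\mathrm{Rep}_{\underline{d}}$; $\mathcal{O}(\underline{e})$ is its $\mathrm{GL}_{\underline{d}}$-orbit. 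*)

From mathcomp Require Import all_boot all_algebra.
From mathcomp Require Import Rstruct complex.
Set Implicit Arguments. Unset Strict Implicit. Unset Printing Implicit Defensive.
Import GRing.Theory Num.Theory.
Local Open Scope ring_scope.

Definition Cplx : fieldType := (Rdefinitions.R)[i].

(* A dimension vector d = (d_0,...,d_n) is a function d : nat -> nat
   (only d 0, ..., d n matter).  An element (A_1,...,A_n) of Rep_d is
   a family A : forall i, 'M_(d i.+1, d i), where A i stands for
   A_{i+1} : C^{d_i} -> C^{d_{i+1}} (only i < n matter). *)
Definition rep (d : nat -> nat) := forall i : nat, 'M[Cplx]_(d i.+1, d i).

Fixpoint prodmx (d : nat -> nat) (A : rep d) (m : nat) : 'M[Cplx]_(d m, d 0) :=
  match m with
  | 0 => 1%:M
  | m'.+1 => A m' *m prodmx A m'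
  end.

Definition in_SigmaD (d : nat -> nat) (n : nat) (A : rep d) : Prop :=
  prodmx A n = 0.

Definition gl_act (d : nat -> nat) (g : forall i : nat, 'M[Cplx]_(d i)) (A : rep d)
  : rep d := fun i => g i.+1 *m A i *m invmx (g i).

(* A rising vector: e : nat -> nat (the entry e k = "star" is ignored)
   with sum_{i in [0,n], i <> k} e_i = d_k. *)
Definition rising (d : nat -> nat) (n k : nat) (e : nat -> nat) : Prop :=
  (\sum_(0 <= i < n.+1 | i != k) e i)%N = d k.

(* Lowest y-coordinate of the dots of column x.  Column x has exactly
   d_x dots, namely (x, lo x + j) for j = 0, ..., d_x - 1:
   - x < k : d_k - d_x - sum_{i=x}^{k-1} e_i <= y < d_k - sum_{i=x}^{k-1} e_i
   - x = k : 0 <= y < d_k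
   - x > k : sum_{i=k+1}^{x} e_i <= y < d_x + sum_{i=k+1}^{x} e_i *)
Definition dot_lo (d : nat -> nat) (k : nat) (e : nat -> nat) (x : nat) : int :=
  if (x < k)%N then
    (d k)%:Z - (d x)%:Z - (\sum_(x <= i < k) e i)%N%:Z
  else if x == k then 0
  else (\sum_(k.+1 <= i < x.+1) e i)%N%:Z.

(* The quiver representation V(e), with the basis of column x being its
   dots ordered by increasing y (j-th basis vector = dot (x, lo x + j)).
   The map x -> x+1 sends dot (x,y) to dot (x+1,y) if it exists, else 0:
   the matrix entry (r, c) is 1 iff dot (x+1, lo(x+1)+r) = (x+1, lo x + c). *)
Definition Vmx (d : nat -> nat) (k : nat) (e : nat -> nat) : rep d :=
  fun x => \matrix_(r < d x.+1, c < d x)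
    (if dot_lo d k e x.+1 + r%:Z == dot_lo d k e x + c%:Z then 1 else 0).

Definition in_orbitV (d : nat -> nat) (n k : nat) (e : nat -> nat) (B : rep d) : Prop :=
  exists g : forall i : nat, 'M[Cplx]_(d i),
    (forall i, (i <= n)%N -> g i \in unitmx) /\
    (forall i, (i < n)%N -> B i = gl_act g (Vmx d k e) i).

From mathcomp Require Import all_boot all_algebra.
From mathcomp Require Import Rstruct complex.
From mathcomp Require Import all_order zify.
Set Implicit Arguments. Unset Strict Implicit. Unset Printing Implicit Defensive.
Import Order.TTheory GRing.Theory Num.Theory.
Local Open Scope ring_scope.

(* V(e) is a representation by partial shifts: the composite A_n ... A_1 can
   only move the dot (0, y) to (n, y).  The dots of column 0 occupy the
   heights [lo 0, lo 0 + d_0) and, because e is rising, lo 0 + d_0 = lo n, so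
   no height survives and the composite vanishes on V(e).  The GL_d-action
   conjugates A_n ... A_1 by g_n and g_0, so it vanishes on the whole orbit. *)

Lemma prodmx_ext (d : nat -> nat) (A A' : rep d) (m : nat) :
  (forall i, (i < m)%N -> A i = A' i) -> prodmx A m = prodmx A' m.
Proof.
elim: m => [//|m IH] eqAA' /=.
by rewrite eqAA' // IH // => i lt_im; apply: eqAA'; apply: ltnW.
Qed.

Lemma prodmx_gl_act (d : nat -> nat) (g : forall i, 'M[Cplx]_(d i)) (A : rep d)
    (m : nat) :
  (forall i, (i <= m)%N -> g i \in unitmx) ->
  prodmx (gl_act g A) m = g m *m prodmx A m *m invmx (g 0%N).
Proof.
elim: m => [|m IH] gU /=; first by rewrite mulmx1 mulmxV ?gU.
rewrite IH => [|i le_im]; last by apply: gU; apply: leqW.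
by rewrite /gl_act !mulmxA mulmxKV ?gU.
Qed.

Lemma in_SigmaD_orbitV (d : nat -> nat) (n k : nat) (e : nat -> nat) (B : rep d) :
  in_SigmaD n (Vmx d k e) -> in_orbitV n k e B -> in_SigmaD n B.
Proof.
move=> V0 [g [gU eqB]].
by rewrite /in_SigmaD (prodmx_ext eqB) prodmx_gl_act // V0 mulmx0 mul0mx.
Qed.

Definition shift_rep (d : nat -> nat) (lo : nat -> int) : rep d :=
  fun x => \matrix_(r < d x.+1, c < d x)
    (if lo x.+1 + r%:Z == lo x + c%:Z then 1 else 0).

Lemma Vmx_shift_rep (d : nat -> nat) (k : nat) (e : nat -> nat) :
  Vmx d k e = shift_rep d (dot_lo d k e).
Proof. by []. Qed.

Lemma prodmx_shift_rep_supp (d : nat -> nat) (lo : nat -> int) (m : nat)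
    (r : 'I_(d m)) (c : 'I_(d 0%N)) :
  prodmx (shift_rep d lo) m r c != 0 -> lo m + r%:Z = lo 0%N + c%:Z.
Proof.
elim: m r => [|m IH] r /=.
  by rewrite mxE; case: (eqVneq r c) => [-> //|_]; rewrite mulr0n eqxx.
apply: contra_neq_eq => neq; rewrite mxE; apply: big1 => j _.
rewrite mxE; case: eqP => [shift_j|_]; last by rewrite mul0r.
by rewrite mul1r; apply/eqP/negPn; apply: contra_neqN neq => /IH <-.
Qed.

Lemma prodmx_shift_rep_eq0 (d : nat -> nat) (lo : nat -> int) (m : nat) :
  lo 0%N + (d 0%N)%:Z <= lo m -> prodmx (shift_rep d lo) m = 0.
Proof.
move=> top0_le; apply/matrixP => r c; rewrite mxE; apply/eqP.
apply: contraTT (ltn_ord c) => /prodmx_shift_rep_supp shift.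
rewrite -leqNgt -lez_nat -(lerD2l (lo 0%N)) -shift.
by rewrite (le_trans top0_le) // lerDl.
Qed.

Lemma big_nat_neq (e : nat -> nat) (n k : nat) : (k <= n)%N ->
  (\sum_(0 <= i < n.+1 | i != k) e i =
    \sum_(0 <= i < k) e i + \sum_(k.+1 <= i < n.+1) e i)%N.
Proof.
move=> le_kn; rewrite (@big_cat_nat _ _ _ k) ?ltnS ?(leqW le_kn) //=.
rewrite [X in (_ + X)%N]big_ltn_cond ?ltnS // eqxx /=.
congr (_ + _)%N; rewrite big_nat_cond [RHS]big_nat_cond; apply: eq_bigl => i.
  by rewrite andbT; case: ltnP => [/ltn_eqF ->|]; rewrite ?andbF.
by rewrite andbT; case: (ltnP k i) => [/gtn_eqF ->|]; rewrite ?andbT ?andbF.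
Qed.

Lemma dot_lo_top0 (d : nat -> nat) (n k : nat) (e : nat -> nat) :
  (k <= n)%N -> rising d n k e ->
  dot_lo d k e 0%N + (d 0%N)%:Z = dot_lo d k e n.
Proof.
move=> le_kn; rewrite /rising big_nat_neq // /dot_lo => sum_e.
case: (posnP k) => [k0|_].
  subst k; rewrite big_geq // in sum_e; rewrite ltn0 eqxx /=.
  case: eqP => [n0|_]; last lia.
  by subst n; rewrite big_geq // in sum_e; lia.
rewrite ltnNge le_kn /=.
case: eqP => [n_k|_]; last lia.
by subst n; rewrite [X in (_ + X)%N]big_geq // in sum_e; lia.
Qed.

Theorem proposition4p7 (n : nat) (d : nat -> nat) (k : nat) (e : nat -> nat) :
  (k <= n)%N ->
  (forall i, (i <= n)%N -> (d k <= d i)%N) ->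
  rising d n k e ->
  forall B : rep d, in_orbitV n k e B -> in_SigmaD n B.
Proof.
move=> le_kn _ rising_e B; apply: in_SigmaD_orbitV.
rewrite /in_SigmaD Vmx_shift_rep; apply: prodmx_shift_rep_eq0.
by rewrite (dot_lo_top0 le_kn rising_e).
Qed.
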